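(* Let $j\in\mathbb{N}$ and $r\in\mathbb{N}_0$. Then \[c_j^{(r)}=\sum_{i=0}^{r}\binom{r}{i} c_{j+i}.\]
   Context: For $j,n\in\mathbb{N}$, $c_j(n)$ is the number of ordered $j$-tuples of integers each $\ge 2$ with product $n$. The associated divisor functions are defined by $c_j^{(0)}=c_j$ and $c_j^{(r)}(n)=\sum_{m\mid n}c_j^{(r-1)}(m)$ for $r,n\in\mathbb{N}$. *)

From mathcomp Require Import all_boot.
Set Implicit Arguments. Unset Strict Implicit. Unset Printing Implicit Defensive.

(* c j n = number of ordered j-tuples (t_0,...,t_{j-1}) of integers >= 2 with
   product n.  For n >= 1 every such factor lies in [2, n], so enumerating
   tuples with entries in 'I_n.+1 = {0..n} is exhaustive. (For n = 0 the
   informal count is infinite; the statement only uses n >= 1.) *)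
Definition c (j n : nat) : nat :=
  #|[set t : {ffun 'I_j -> 'I_n.+1} |
      [forall i, 2 <= t i] && (\prod_(i < j) (t i : nat) == n)]|.

Fixpoint cr (r j n : nat) : nat :=
  match r with
  | 0 => c j n
  | r'.+1 => \sum_(m <- divisors n) cr r' j m
  end.

From mathcomp Require Import all_boot.
Set Implicit Arguments. Unset Strict Implicit. Unset Printing Implicit Defensive.

(* Splitting off one factor shows that c_(j+1) is the Dirichlet convolution of
   c_j with c_1 = 1 - [_ == 1], hence sum_(d | n) c_j(d) = c_j(n) + c_(j+1)(n);
   iterating this r times is Pascal's rule.  As [c j n] only allows factors at
   most n, the recursion is proved for the count [c_bounded N j m] with factors
   at most N, which does not depend on N as long as 0 < m <= N. *)

Section FfunCons.

Variables (T : finType) (j : nat).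

Definition ffun_cons (x : T) (u : {ffun 'I_j -> T}) : {ffun 'I_j.+1 -> T} :=
  [ffun i => if unlift ord0 i is Some k then u k else x].

Lemma ffun_cons0 x u : ffun_cons x u ord0 = x.
Proof. by rewrite ffunE unlift_none. Qed.

Lemma ffun_cons_lift x u k : ffun_cons x u (lift ord0 k) = u k.
Proof. by rewrite ffunE liftK. Qed.

Lemma ffun_cons_bij : bijective (fun p : T * {ffun 'I_j -> T} => ffun_cons p.1 p.2).
Proof.
exists (fun t : {ffun 'I_j.+1 -> T} => (t ord0, [ffun k => t (lift ord0 k)])).
  move=> [x u] /=.
  by rewrite ffun_cons0; congr pair; apply/ffunP => k; rewrite ffunE ffun_cons_lift.
move=> t; apply/ffunP => i; rewrite ffunE.
by case: unliftP => [k ->|->]; rewrite ?ffunE.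
Qed.

Lemma big_ffunS (R : Type) (idx : R) (op : Monoid.com_law idx)
    (F : {ffun 'I_j.+1 -> T} -> R) :
  \big[op/idx]_t F t = \big[op/idx]_x \big[op/idx]_u F (ffun_cons x u).
Proof.
rewrite pair_big (reindex _ (onW_bij _ ffun_cons_bij)).
by apply: eq_bigl => -[].
Qed.

Lemma forall_ffun_cons (P : pred T) x u :
  [forall i, P (ffun_cons x u i)] = P x && [forall k, P (u k)].
Proof.
apply/forallP/andP => [Pt|[Px /forallP Pu] i].
  split; first by rewrite -(ffun_cons0 x u).
  by apply/forallP => k; rewrite -(ffun_cons_lift x).
by rewrite ffunE; case: unlift.
Qed.

End FfunCons.

Lemma prod_ffun_cons N j (x : 'I_N) (u : {ffun 'I_j -> 'I_N}) :
  \prod_(i < j.+1) (ffun_cons x u i : nat) = x * \prod_(k < j) (u k : nat).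
Proof.
by rewrite big_ord_recl ffun_cons0; under eq_bigr do rewrite ffun_cons_lift.
Qed.

Definition c_bounded (N j m : nat) : nat :=
  \sum_(t : {ffun 'I_j -> 'I_N.+1})
     ([forall i, 2 <= t i] && (\prod_(i < j) (t i : nat) == m)).

Lemma c_boundedE j n : c j n = c_bounded n j n.
Proof.
rewrite /c /c_bounded cardsE -sum1_card big_mkcond /=.
by apply: eq_bigr => t _; rewrite unfold_in; case: (_ && _).
Qed.

Lemma c_bounded0 N m : c_bounded N 0 m = (m == 1).
Proof.
rewrite /c_bounded (eq_bigr (fun=> (m == 1) : nat)) => [|t _]; last first.
  by rewrite big_ord0 eq_sym; have -> : [forall i, 2 <= t i] by apply/forallP => -[].
by rewrite sum_nat_const card_ffun !card_ord expn0 mul1n.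
Qed.

Lemma sum_cofactor_ge2 N m p : 0 < p -> 0 < m <= N ->
  \sum_(x < N.+1) ((2 <= x) && (x * p == m)) = (p %| m) && (p < m).
Proof.
move=> p_gt0 /andP[m_gt0 le_mN].
have [/dvdnP[k def_m] | ndvd_pm] := boolP (p %| m); last first.
  rewrite big1 // => x _; case: eqP => [def_m|]; rewrite ?andbF //.
  by rewrite -def_m dvdn_mull in ndvd_pm.
have lt_kN : k < N.+1 by rewrite ltnS (leq_trans _ le_mN) // def_m leq_pmulr.
rewrite def_m (bigD1 (Ordinal lt_kN)) //= eqxx andbT big1 => [|x].
  by rewrite addn0 -{1}[p]mul1n ltn_pmul2r.
by rewrite -val_eqE /= eqn_pmul2r // => /negbTE ->; rewrite andbF.
Qed.

Lemma indicator_mem_uniq (T : eqType) (s : seq T) (P : pred T) x : uniq s ->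
  (x \in s) && P x = \sum_(y <- s | P y) (x == y) :> nat.
Proof.
move=> s_uniq; rewrite andbC -mem_filter -count_uniq_mem ?filter_uniq //.
rewrite -sum1_count big_filter_cond big_mkcondr /=.
by apply: eq_bigr => y _; rewrite eq_sym; case: eqP.
Qed.

Lemma c_boundedS N j m : 0 < m <= N ->
  c_bounded N j.+1 m = \sum_(d <- divisors m | d < m) c_bounded N j d.
Proof.
move=> m_range; have m_gt0 : 0 < m by case/andP: m_range.
rewrite /c_bounded big_ffunS exchange_big /=.
under eq_bigr do under eq_bigr
  do rewrite (forall_ffun_cons (fun y : 'I_N.+1 => 2 <= y)) prod_ffun_cons.
transitivity (\sum_(u : {ffun 'I_j -> 'I_N.+1})
  [forall k, 2 <= u k] * ((\prod_(k < j) (u k : nat) \in divisors m) &&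
                          (\prod_(k < j) (u k : nat) < m))).
  apply: eq_bigr => u _; rewrite -(dvdn_divisors _ m_gt0).
  have [/forallP u_ge2 | _] := boolP [forall k, 2 <= u k]; last first.
    by rewrite big1 // => x _; rewrite andbF.
  have prod_gt0 : 0 < \prod_(k < j) (u k : nat).
    exact: prodn_gt0 (fun k => ltnW (u_ge2 k)).
  rewrite mul1n -(sum_cofactor_ge2 prod_gt0 m_range).
  by apply: eq_bigr => x _; rewrite andbT.
rewrite [RHS]exchange_big; apply: eq_bigr => u _.
under [RHS]eq_bigr do rewrite -mulnb.
by rewrite -big_distrr -indicator_mem_uniq ?divisors_uniq.
Qed.

Lemma c_bounded_c N j m : 0 < m <= N -> c_bounded N j m = c j m.
Proof.
elim: j N m => [|j IHj] N m m_range; first by rewrite c_boundedE !c_bounded0.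
have /andP[m_gt0 le_mN] := m_range.
have sum_c K : m <= K -> c_bounded K j.+1 m = \sum_(d <- divisors m | d < m) c j d.
  move=> le_mK; have mK_range : 0 < m <= K by rewrite m_gt0 le_mK.
  rewrite (c_boundedS _ mK_range) big_seq_cond [RHS]big_seq_cond.
  apply: eq_bigr => d /andP[]; rewrite -(dvdn_divisors _ m_gt0) => d_dvd_m _.
  by apply: IHj; rewrite (dvdn_gt0 m_gt0 d_dvd_m) (leq_trans (dvdn_leq m_gt0 d_dvd_m)).
by rewrite c_boundedE !sum_c ?leqnn.
Qed.

Lemma c_rec j n : 0 < n -> c j.+1 n = \sum_(d <- divisors n | d < n) c j d.
Proof.
move=> n_gt0; have n_range : 0 < n <= n by rewrite n_gt0 leqnn.
rewrite c_boundedE (c_boundedS _ n_range) big_seq_cond [RHS]big_seq_cond.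
apply: eq_bigr => d /andP[]; rewrite -(dvdn_divisors _ n_gt0) => d_dvd_n _.
by rewrite c_bounded_c // (dvdn_gt0 n_gt0 d_dvd_n) (dvdn_leq n_gt0 d_dvd_n).
Qed.

Lemma sum_divisors_c j n : 0 < n ->
  \sum_(d <- divisors n) c j d = c j n + c j.+1 n.
Proof.
move=> n_gt0; rewrite (bigD1_seq n (divisors_id n_gt0) (divisors_uniq n)).
rewrite (c_rec _ n_gt0); congr addn.
rewrite big_seq_cond [RHS]big_seq_cond; apply: eq_bigl => d; apply: andb_id2l.
rewrite -(dvdn_divisors _ n_gt0) => /(dvdn_leq n_gt0) le_dn.
by rewrite ltn_neqAle le_dn andbT.
Qed.

Lemma sum_binomial_succ (f : nat -> nat) r :
  \sum_(0 <= i < r.+1) 'C(r, i) * (f i + f i.+1) =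
  \sum_(0 <= i < r.+2) 'C(r.+1, i) * f i.
Proof.
under eq_bigr do rewrite mulnDr.
rewrite [RHS]big_nat_recl // bin0 mul1n.
under [X in _ = _ + X]eq_bigr do rewrite binS mulnDl.
rewrite !big_split /= addnA; congr addn.
by rewrite big_nat_recl // bin0 mul1n [in RHS]big_nat_recr //= bin_small // mul0n addn0.
Qed.

Theorem lemma12 (j r n : nat) : 0 < j -> 0 < n ->
  cr r j n = \sum_(0 <= i < r.+1) 'C(r, i) * c (j + i) n.
Proof.
move=> _; elim: r n => [|r IHr] n n_gt0; first by rewrite big_nat1 bin0 mul1n addn0.
transitivity (\sum_(m <- divisors n) \sum_(0 <= i < r.+1) 'C(r, i) * c (j + i) m).
  rewrite /= big_seq [RHS]big_seq; apply: eq_bigr => m.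
  by rewrite -(dvdn_divisors _ n_gt0) => /(dvdn_gt0 n_gt0); apply: IHr.
rewrite exchange_big -sum_binomial_succ; apply: eq_bigr => i _.
by rewrite -big_distrr (sum_divisors_c _ n_gt0) addnS.
Qed.
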